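(* Let $\psi\subseteq\mathcal{E}_1^\omega\times\mathcal{E}_2^\omega$ be a safety relation. Then for all $\tau_1\in\mathcal{E}_1^\omega,\tau_2\in\mathcal{E}_2^\omega$: $(\tau_1,\tau_2)\in\psi\iff(\tau_1,\tau_2)\in|\psi|_{\mathit{safe}}\iff(\tau_1,\tau_2,\psi)\in\texttt{safe}$.
   Context: For $\tau\in\mathcal{E}^\omega$, $\tau[0..n)$ denotes its finite prefix of length $n$. Safety closure: $|\psi|_{\mathit{safe}}=\{(\tau_1,\tau_2)\mid\forall n\in\mathbb{N}.\ \exists\tau_1'\in\mathcal{E}_1^\omega,\tau_2'\in\mathcal{E}_2^\omega.\ (\tau_1[0..n)\cdot\tau_1',\ \tau_2[0..n)\cdot\tau_2')\in\psi\}$. A trace relation $\psi$ is a safety relation iff $|\psi|_{\mathit{safe}}\subseteq\psi$. Derivative: $\Delta_{e_1,e_2}(\psi)=\{(\tau_1,\tau_2)\mid(e_1\tau_1,e_2\tau_2)\in\psi\}$. $\texttt{safe}$ is the greatest fixed point of the monotone operator $\texttt{safeF}(C)=\{(e_1\tau_1,e_2\tau_2,\psi)\mid\Delta_{e_1,e_2}(\psi)\neq\emptyset\wedge(\tau_1,\tau_2,\Delta_{e_1,e_2}(\psi))\in C\}$ on subsets of $\mathcal{E}_1^\omega\times\mathcal{E}_2^\omega\times\mathcal{P}(\mathcal{E}_1^\omega\times\mathcal{E}_2^\omega)$. *)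

From Stdlib Require Import Arith.

Definition trace (E : Type) : Type := nat -> E.

Definition trel (E1 E2 : Type) : Type := trace E1 -> trace E2 -> Prop.

Definition scons {E : Type} (e : E) (tau : trace E) : trace E :=
  fun n => match n with 0 => e | S k => tau k end.

Definition pcat {E : Type} (n : nat) (tau tau' : trace E) : trace E :=
  fun i => if i <? n then tau i else tau' (i - n).

Definition safe_closure {E1 E2 : Type} (psi : trel E1 E2) : trel E1 E2 :=
  fun t1 t2 => forall n : nat, exists (t1' : trace E1) (t2' : trace E2),
    psi (pcat n t1 t1') (pcat n t2 t2').

Definition safety_relation {E1 E2 : Type} (psi : trel E1 E2) : Prop :=
  forall t1 t2, safe_closure psi t1 t2 -> psi t1 t2.

Definition deriv {E1 E2 : Type} (e1 : E1) (e2 : E2) (psi : trel E1 E2) : trel E1 E2 :=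
  fun t1 t2 => psi (scons e1 t1) (scons e2 t2).

Definition tset (E1 E2 : Type) : Type := trace E1 -> trace E2 -> trel E1 E2 -> Prop.

Definition trel_nonempty {E1 E2 : Type} (psi : trel E1 E2) : Prop :=
  exists t1 t2, psi t1 t2.

Definition safeF {E1 E2 : Type} (C : tset E1 E2) : tset E1 E2 :=
  fun s1 s2 psi => exists (e1 : E1) (t1 : trace E1) (e2 : E2) (t2 : trace E2),
    s1 = scons e1 t1 /\ s2 = scons e2 t2 /\
    trel_nonempty (deriv e1 e2 psi) /\ C t1 t2 (deriv e1 e2 psi).

(* safe = greatest fixed point of safeF (Knaster–Tarski: union of all
   post-fixed points C ⊆ safeF C). *)
Definition safe {E1 E2 : Type} : tset E1 E2 :=
  fun s1 s2 psi => exists C : tset E1 E2,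
    (forall a b r, C a b r -> safeF C a b r) /\ C s1 s2 psi.

From Stdlib Require Import Arith Lia FunctionalExtensionality.

(* Peeling off the first events turns the closure of
   [psi] into the closure of a derivative, with the prefix one shorter, so the
   closure is a post-fixed point of [safeF] and hence contained in [safe];
   conversely, unfolding [safeF] n times along a post-fixed point shows that
   every length-n prefix is extendable.  Safety of [psi] is only needed for the
   first equivalence. *)

Section Prefixes.

Context {E : Type}.

Lemma pcat_0 (t t' : trace E) : pcat 0 t t' = t'.
Proof.
  apply functional_extensionality; intros i; unfold pcat; simpl.
  now rewrite Nat.sub_0_r.
Qed.

Lemma pcat_S (n : nat) (e : E) (t t' : trace E) :
  pcat (S n) (scons e t) t' = scons e (pcat n t t').
Proof.
  now apply functional_extensionality; intros [|k].
Qed.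

Lemma pcat_drop (n : nat) (t : trace E) : pcat n t (fun i => t (i + n)) = t.
Proof.
  apply functional_extensionality; intros i; unfold pcat.
  destruct (Nat.ltb_spec i n); [reflexivity|].
  f_equal; lia.
Qed.

Lemma scons_eta (t : trace E) : t = scons (t 0) (fun i => t (S i)).
Proof.
  now apply functional_extensionality; intros [|k].
Qed.

End Prefixes.

Section SafetyClosure.

Context {E1 E2 : Type}.
Implicit Types (psi : trel E1 E2) (C : tset E1 E2).

Lemma safe_closure_incl psi t1 t2 : psi t1 t2 -> safe_closure psi t1 t2.
Proof.
  intros H n; exists (fun i => t1 (i + n)), (fun i => t2 (i + n)).
  now rewrite !pcat_drop.
Qed.

Lemma safe_closure_nonempty psi t1 t2 :
  safe_closure psi t1 t2 -> trel_nonempty psi.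
Proof.
  intros H; destruct (H 0) as (t1' & t2' & Hpsi).
  rewrite !pcat_0 in Hpsi; now exists t1', t2'.
Qed.

Lemma safe_closure_deriv psi e1 e2 t1 t2 :
  safe_closure psi (scons e1 t1) (scons e2 t2) ->
  safe_closure (deriv e1 e2 psi) t1 t2.
Proof.
  intros H n; destruct (H (S n)) as (t1' & t2' & Hpsi).
  rewrite !pcat_S in Hpsi; now exists t1', t2'.
Qed.

Lemma safe_closure_postfixed :
  forall t1 t2 psi, safe_closure psi t1 t2 ->
    safeF (fun a b r => safe_closure r a b) t1 t2 psi.
Proof.
  intros t1 t2 psi H.
  rewrite (scons_eta t1), (scons_eta t2) in H.
  exists (t1 0), (fun i => t1 (S i)), (t2 0), (fun i => t2 (S i)).
  repeat split; try apply scons_eta.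
  - apply safe_closure_nonempty with (fun i => t1 (S i)) (fun i => t2 (S i)).
    now apply safe_closure_deriv.
  - now apply safe_closure_deriv.
Qed.

Lemma postfixed_safe_closure C :
  (forall a b r, C a b r -> safeF C a b r) ->
  forall t1 t2 psi, C t1 t2 psi -> safe_closure psi t1 t2.
Proof.
  intros HC t1 t2 psi H n; revert t1 t2 psi H.
  induction n as [|n IH]; intros t1 t2 psi H;
    destruct (HC _ _ _ H) as (e1 & u1 & e2 & u2 & -> & -> & Hne & HCd).
  - destruct Hne as (u1' & u2' & Hpsi).
    exists (scons e1 u1'), (scons e2 u2'); now rewrite !pcat_0.
  - destruct (IH _ _ _ HCd) as (u1' & u2' & Hpsi).
    exists u1', u2'; now rewrite !pcat_S.
Qed.

Lemma safe_iff_safe_closure psi t1 t2 :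
  safe t1 t2 psi <-> safe_closure psi t1 t2.
Proof.
  split.
  - intros (C & HC & H); exact (postfixed_safe_closure C HC _ _ _ H).
  - intros H; exists (fun a b r => safe_closure r a b).
    split; [exact safe_closure_postfixed | exact H].
Qed.

End SafetyClosure.

Theorem mainTheorem4 (E1 E2 : Type) (psi : trel E1 E2) :
  safety_relation psi ->
  forall (t1 : trace E1) (t2 : trace E2),
    (psi t1 t2 <-> safe_closure psi t1 t2) /\
    (safe_closure psi t1 t2 <-> safe t1 t2 psi).
Proof.
  intros Hsafety t1 t2; split.
  - split; [apply safe_closure_incl | apply Hsafety].
  - symmetry; apply safe_iff_safe_closure.
Qed.
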